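(* Let $\alpha\in(0,1]$ and $\mathbf u=(u_1,\dots,u_m)\in[0,1]^m$ with $m\ge1$. Let $k_1,\dots,k_l\in\{1,\dots,m\}$ be distinct with $\sum_{i=1}^lu_{k_i}\le\alpha l$. Then $H_{\mathrm o}([\mathbf u])\preccurlyeq[(u_{k_1},\dots,u_{k_l})]$. Moreover, if $H_{\mathrm o}([\mathbf u])=\varnothing$, then every nonempty $S\subset\{1,\dots,m\}$ satisfies $\sum_{i\in S}u_i>\alpha|S|$.
   Context: $\mathcal S_{\mathrm o}=\bigcup_{m\ge1}\{(v_1,\dots,v_m)\in[0,1]^m:v_1\le\cdots\le v_m\}\cup\{\varnothing\}$, where $\varnothing$ is the vector of length $0$; $\dim(\mathbf u)$ is the length of $\mathbf u$. Partial order: for $\mathbf u,\mathbf v\in\mathcal S_{\mathrm o}$, $\mathbf u\preccurlyeq\mathbf v$ iff $\dim(\mathbf u)\ge\dim(\mathbf v)$ and $u_i\le v_i$ for $i=1,\dots,\dim(\mathbf v)$ (in particular $\mathbf u\preccurlyeq\varnothing$ for all $\mathbf u$). For a finite vector $\mathbf v$, $[\mathbf v]$ is its order statistic (components sorted increasingly), $[\varnothing]=\varnothing$; for $l=0$, $[(u_{k_1},\dots,u_{k_l})]=\varnothing$. For $\mathbf u=(u_1,\dots,u_d)\in\mathcal S_{\mathrm o}$ with $d\ge1$, $I_{\mathrm o}(\mathbf u)=\max\{n\in\{0,\dots,d\}:\sum_{i=1}^nu_i\le\alpha n\}$, and $I_{\mathrm o}(\varnothing)=0$; $H_{\mathrm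 o}(\mathbf u)=(u_1,\dots,u_{I_{\mathrm o}(\mathbf u)})$ if $I_{\mathrm o}(\mathbf u)\ge1$ and $H_{\mathrm o}(\mathbf u)=\varnothing$ otherwise. *)

(* the statement is purely order-theoretic, so we state it
   over an arbitrary real field R (covers the real numbers). *)
From HB Require Import structures.
From mathcomp Require Import all_boot all_order all_algebra.
Set Implicit Arguments. Unset Strict Implicit. Unset Printing Implicit Defensive.
Import Order.TTheory GRing.Theory Num.Theory.
Local Open Scope ring_scope.

(* Order statistic [v]: components sorted increasingly. *)
Definition ostat (R : realFieldType) (v : seq R) : seq R := sort <=%R v.

Definition preceq (R : realFieldType) (u v : seq R) : Prop :=
  (size v <= size u)%N /\ forall i, (i < size v)%N -> nth 0 u i <= nth 0 v i.

Definition I_o (R : realFieldType) (alpha : R) (u : seq R) : nat :=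
  \max_(n < (size u).+1 | (\sum_(i < n) nth 0 u i <= alpha * n%:R)%R) (n : nat).

Definition H_o (R : realFieldType) (alpha : R) (u : seq R) : seq R :=
  take (I_o alpha u) u.

From HB Require Import structures.
From mathcomp Require Import all_boot all_order all_algebra.
Import Order.TTheory GRing.Theory Num.Theory.
Local Open Scope ring_scope.

(* Say that a sequence s is dominated by t when every lower set
   [{z | z <= y}] contains at most as many entries of s as of t.  Then the
   i-th order statistic of t is at most that of s.  A subfamily of u is
   dominated by u, so if it has l entries and mean at most alpha, the l
   smallest entries of u have mean at most alpha as well: I_o([u]) >= l, and
   the first l entries of H_o([u]) are bounded by the order statistics of the
   subfamily.  For the second claim, a nonempty S with sum at most alpha |S|
   would force H_o([u]) to have length at least |S| > 0. *)

Section OrderStatistics.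
Variables (disp : Order.disp_t) (T : orderType disp).
Local Open Scope order_scope.

Lemma count_le_lt_nth (x0 : T) {s : seq T} {i : nat} {y : T} :
  sorted <=%O s -> y < nth x0 s i -> (count (<= y) s <= i)%N.
Proof.
move=> s_sorted y_lt.
have drop_gt z : z \in drop i s -> y < z.
  case/(nthP x0) => j; rewrite size_drop nth_drop => j_lt <-.
  have ij_lt : (i + j < size s)%N by rewrite -ltn_subRL.
  apply: (lt_le_trans y_lt); apply: le_sorted_leq_nth; rewrite ?inE ?leq_addr //.
  exact: leq_ltn_trans (leq_addr _ _) ij_lt.
rewrite -(cat_take_drop i s) count_cat.
have -> : count (<= y) (drop i s) = 0%N.
  rewrite (@eq_in_count _ _ pred0) ?count_pred0 // => z /drop_gt.
  by rewrite /= ltNge => /negbTE.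
by rewrite addn0 (leq_trans (count_size _ _)) // size_take_min geq_minl.
Qed.

Lemma count_le_nth_gt (x0 : T) {s : seq T} {i : nat} :
  sorted <=%O s -> (i < size s)%N -> (i < count (<= nth x0 s i) s)%N.
Proof.
move=> s_sorted i_lt; set y := nth x0 s i.
rewrite -(cat_take_drop i.+1 s) count_cat.
rewrite (leq_trans _ (leq_addr _ _)) // (@eq_in_count _ _ predT) ?count_predT.
  by rewrite size_takel.
move=> z /(nthP x0) [j]; rewrite size_takel // => j_lt <-.
rewrite nth_take //=; apply: le_sorted_leq_nth; rewrite ?inE //.
exact: leq_trans j_lt i_lt.
Qed.

Section Dominated.
Variables s t : seq T.
Hypothesis dominated : forall y, (count (<= y) s <= count (<= y) t)%N.

Lemma size_le_dominated : (size s <= size t)%N.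
Proof.
case: s dominated => [// | x s'] dominated_xs.
have := count_le_nth_gt x (i := size s') (sort_le_sorted (x :: s')).
rewrite size_sort count_sort => /(_ (leqnn _)) /leq_trans; apply.
exact: leq_trans (dominated_xs _) (count_size _ _).
Qed.

Lemma nth_sort_le_dominated (x0 : T) (i : nat) : (i < size s)%N ->
  nth x0 (sort <=%O t) i <= nth x0 (sort <=%O s) i.
Proof.
move=> i_lt; set y := nth x0 (sort <=%O s) i.
have : (i < count (<= y) s)%N.
  by rewrite -(count_sort <=%O) count_le_nth_gt ?sort_le_sorted ?size_sort.
rewrite leNgt; apply: contraTN => /(count_le_lt_nth x0 (sort_le_sorted t)).
by rewrite count_sort -leqNgt; apply: leq_trans (dominated y).
Qed.

End Dominated.
End OrderStatistics.

Lemma count_map_enum (T : finType) (U : Type) (f : T -> U) (p : pred U) :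
  count p [seq f x | x <- enum T] = #|[pred x | p (f x)]|.
Proof. by rewrite count_map enumT cardE /enum_mem size_filter. Qed.

Lemma count_map_injective_le (I J : finType) (U : Type) (u : J -> U)
    (k : I -> J) (p : pred U) : injective k ->
  (count p [seq u (k i) | i <- enum I] <= count p [seq u j | j <- enum J])%N.
Proof.
move=> k_inj; rewrite !count_map_enum.
rewrite -[X in (X <= _)%N](card_imset [pred i | p (u (k i))] k_inj).
by apply/subset_leq_card/subsetP => _ /imsetP [i ? ->].
Qed.

Lemma sum_nth_sort (R : nmodType) (r : rel R) (s : seq R) :
  \sum_(i < size s) nth 0 (sort r s) i = \sum_(x <- s) x.
Proof.
by rewrite -(perm_big _ (permEl (perm_sort r s))) (big_nth 0) big_mkord size_sort.
Qed.

Section Truncation.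
Variables (R : realFieldType) (alpha : R) (w : seq R).

Lemma I_o_le_size : (I_o alpha w <= size w)%N.
Proof. by apply/bigmax_leqP => i _; rewrite -ltnS. Qed.

Lemma leq_I_o (n : nat) : (n <= size w)%N ->
  \sum_(i < n) nth 0 w i <= alpha * n%:R -> (n <= I_o alpha w)%N.
Proof.
rewrite -ltnS => n_lt sum_n.
exact: (@leq_bigmax_cond _ _ (fun n : 'I_(size w).+1 => (n : nat)) (Ordinal n_lt)).
Qed.

Lemma size_H_o : size (H_o alpha w) = I_o alpha w.
Proof. exact/size_takel/I_o_le_size. Qed.

Lemma nth_H_o (i : nat) : (i < I_o alpha w)%N -> nth 0 (H_o alpha w) i = nth 0 w i.
Proof. by move=> i_lt; rewrite /H_o nth_take. Qed.

End Truncation.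

Lemma preceq_H_o_ostat (R : realFieldType) (alpha : R) (s t : seq R) :
  (forall y, (count (<= y) s <= count (<= y) t)%N) ->
  \sum_(x <- s) x <= alpha * (size s)%:R ->
  preceq (H_o alpha (ostat t)) (ostat s).
Proof.
move=> dominated sum_s.
have nth_le i : (i < size s)%N -> nth 0 (ostat t) i <= nth 0 (ostat s) i.
  exact: nth_sort_le_dominated.
have size_le_I : (size s <= I_o alpha (ostat t))%N.
  apply: leq_I_o; first by rewrite size_sort; apply: size_le_dominated.
  rewrite (le_trans _ sum_s) // -(sum_nth_sort _ <=%R).
  by apply: ler_sum => i _; apply: nth_le.
rewrite /preceq size_sort size_H_o; split=> // i i_lt.
by rewrite nth_H_o ?nth_le // (leq_trans i_lt size_le_I).
Qed.

Theorem mainTheorem14 (R : realFieldType) (alpha : R) (m : nat)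
    (u : 'I_m -> R) :
  0 < alpha -> alpha <= 1 -> (1 <= m)%N ->
  (forall j, 0 <= u j <= 1) ->
  (forall (l : nat) (k : 'I_l -> 'I_m), injective k ->
     \sum_(i < l) u (k i) <= alpha * l%:R ->
     preceq (H_o alpha (ostat [seq u j | j <- enum 'I_m]))
            (ostat [seq u (k i) | i <- enum 'I_l]))
  /\
  (H_o alpha (ostat [seq u j | j <- enum 'I_m]) = [::] ->
     forall S : {set 'I_m}, S != set0 ->
       alpha * (#|S|)%:R < \sum_(j in S) u j).
Proof.
move=> _ _ _ _.
have subfamily_preceq l (k : 'I_l -> 'I_m) : injective k ->
    \sum_(i < l) u (k i) <= alpha * l%:R ->
    preceq (H_o alpha (ostat [seq u j | j <- enum 'I_m]))
           (ostat [seq u (k i) | i <- enum 'I_l]).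
  move=> k_inj sum_k; apply: preceq_H_o_ostat.
    by move=> y; apply: count_map_injective_le.
  by rewrite big_map big_enum size_map size_enum_ord.
split=> // H_o_nil S S_neq0; rewrite ltNge; apply: contraNN S_neq0 => sum_S.
have [] := subfamily_preceq _ _ (@enum_val_inj _ (mem S)).
  by rewrite -big_enum_val.
by rewrite H_o_nil /ostat size_sort size_map size_enum_ord leqn0 cards_eq0.
Qed.
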